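(* Let $\mathcal{L}$ be any fragment (set of specifications) of quantifier-free non-linear real arithmetic ($\mathsf{NRA}$) for which there is a sound and complete algorithm $\mathcal{A}_{\mathcal{L}}$ for solving $\mathcal{RPS}$, i.e. an algorithm which, for every specification $\varphi(\mathbf{X},\mathbf{Y})\in\mathcal{L}$, outputs a program of the grammar $\mathcal{G}$ that realizes $\varphi$ over the reals. Then $\mathcal{A}_{\mathcal{L}}$ also solves $\mathcal{RPS}_{\mathbb{Q}}$ for the fragment $\mathcal{L}$, i.e. for every $\varphi\in\mathcal{L}$ the program it outputs realizes $\varphi$ over the rationals. Moreover, there exists a fragment of $\mathsf{NRA}$ for which there does not exist any sound and complete algorithm for solving $\mathcal{RPS}$, but for which there is a sound and complete algorithm for solving $\mathcal{RPS}_{\mathbb{Q}}$.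
   Context: A specification is a quantifier-free $\mathsf{NRA}$ formula $\varphi(\mathbf{X},\mathbf{Y})$: a Boolean combination of polynomial inequalities $p\bowtie 0$, $\bowtie\in\{<,>,\le,\ge\}$, where $p$ is a polynomial with rational coefficients over the input variables $\mathbf{X}=(x_1,\dots,x_m)$ and the output variables $\mathbf{Y}=(y_1,\dots,y_n)$. The grammar $\mathcal{G}$ generates imperative programs built from: assignments $v\leftarrow t$ where $t$ is a polynomial term with rational coefficients over program variables; conditionals ''if $C$ then $P$ else $P'$''; loops ''while $C$ do $P$'', where each condition $C$ is a Boolean combination of polynomial inequalities over program variables; sequential composition; and return statements returning either a tuple of variables or the special symbol $\bot$. Input variables $\mathbf{X}$ are never assigned. For a set $D\in\{\mathbb{R},\mathbb{Q}\}$, a program $\mathsf{Prog}(\mathbf{X})$ realizes $\varphi$ over $D$ if for every $\mathbf{A}\in D^{|\mathbf{X}|}$, running $\mathsf{Prog}$ on $\mathbf{A}$ terminates and returns either $\bot$, in which case $\varphi(\mathbf{A},\mathbf{B})$ is false for all $\mathbf{B}\in D^{|\mathbf{Y}|}$, or a tuple $\mathbf{B}\in D^{|\mathbf{Y}|}$ with $\varphi(\mathbf{A},\mathbf{B})$ true. $\mathcal{RPS}$ (resp. $\mathcal{RPS}_{\mathbb{Q}}$) is the problem of producing, from $\varphi$, a program of $\mathcal{G}$ realizing $\varphi$ over $\mathbb{R}$ (resp. over $\mathbb{Q}$). *)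

From HB Require Import structures.
From mathcomp Require Import all_boot all_order all_algebra.
From Stdlib Require Import Reals.
From mathcomp Require Import Rstruct.
Set Implicit Arguments. Unset Strict Implicit. Unset Printing Implicit Defensive.
Import Order.TTheory GRing.Theory Num.Theory.
Local Open Scope ring_scope.

Inductive term (V : Type) : Type :=
  | TVar of V
  | TConst of rat
  | TAdd of term V & term V
  | TMul of term V & term V
  | TOpp of term V.

Fixpoint teval (V : Type) (D : numFieldType) (rho : V -> D) (t : term V) : D :=
  match t with
  | TVar v => rho v
  | TConst q => ratr q
  | TAdd t1 t2 => teval rho t1 + teval rho t2
  | TMul t1 t2 => teval rho t1 * teval rho t2
  | TOpp t1 => - teval rho t1
  end.

Inductive cmp := CLt | CGt | CLe | CGe.

Definition cmp_eval (D : numFieldType) (c : cmp) (x : D) : bool :=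
  match c with
  | CLt => x < 0
  | CGt => x > 0
  | CLe => x <= 0
  | CGe => x >= 0
  end.

Inductive fml (V : Type) : Type :=
  | FAtom of term V & cmp
  | FNot of fml V
  | FAnd of fml V & fml V
  | FOr of fml V & fml V.

Fixpoint feval (V : Type) (D : numFieldType) (rho : V -> D) (f : fml V) : bool :=
  match f with
  | FAtom t c => cmp_eval c (teval rho t)
  | FNot f1 => ~~ feval rho f1
  | FAnd f1 f2 => feval rho f1 && feval rho f2
  | FOr f1 f2 => feval rho f1 || feval rho f2
  end.

Record spec := Spec {
  sm : nat;
  sn : nat;
  sphi : fml ('I_sm + 'I_sn)%type    (* inl i = x_(i+1), inr j = y_(j+1) *)
}.

Definition spec_holds (D : numFieldType) (phi : spec) (A B : seq D) : bool :=
  feval (fun v : ('I_(sm phi) + 'I_(sn phi))%type =>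
           match v with inl i => nth 0 A i | inr j => nth 0 B j end)
        (sphi phi).

(* program variables: input variables PIn i (= x_(i+1), never assigned)
   and local variables PLoc k *)
Inductive pvar := PIn of nat | PLoc of nat.

Inductive prog :=
  | PAssign of nat & term pvar            (* PLoc k <- t *)
  | PIf of fml pvar & prog & prog
  | PWhile of fml pvar & prog
  | PSeq of prog & prog
  | PRet of seq pvar
  | PRetBot.

Inductive outcome (D : Type) := OBot | OTuple of seq D.

Inductive result (D : Type) :=
  | RNormal of (nat -> D)
  | RReturned of outcome D.

Section Exec.
Variable D : numFieldType.
Variable A : seq D.

Definition var_val (s : nat -> D) (v : pvar) : D :=
  match v with PIn i => nth 0 A i | PLoc k => s k end.

Definition upd (s : nat -> D) (k : nat) (x : D) : nat -> D :=
  fun k' => if k' == k then x else s k'.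

(* big-step semantics; a run terminates iff it has a derivation *)
Inductive exec : (nat -> D) -> prog -> result D -> Prop :=
  | ExAssign s k t :
      exec s (PAssign k t) (RNormal (upd s k (teval (var_val s) t)))
  | ExIfT s c P Q r :
      feval (var_val s) c -> exec s P r -> exec s (PIf c P Q) r
  | ExIfF s c P Q r :
      ~~ feval (var_val s) c -> exec s Q r -> exec s (PIf c P Q) r
  | ExWhileF s c P :
      ~~ feval (var_val s) c -> exec s (PWhile c P) (RNormal s)
  | ExWhileTN s s' c P r :
      feval (var_val s) c -> exec s P (RNormal s') ->
      exec s' (PWhile c P) r -> exec s (PWhile c P) r
  | ExWhileTR s c P o :
      feval (var_val s) c -> exec s P (RReturned o) ->
      exec s (PWhile c P) (RReturned o)
  | ExSeqN s s' P Q r :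
      exec s P (RNormal s') -> exec s' Q r -> exec s (PSeq P Q) r
  | ExSeqR s P Q o :
      exec s P (RReturned o) -> exec s (PSeq P Q) (RReturned o)
  | ExRet s vs :
      exec s (PRet vs) (RReturned (OTuple (map (var_val s) vs)))
  | ExRetBot s :
      exec s PRetBot (RReturned (OBot D)).
End Exec.

Definition realizes (D : numFieldType) (P : prog) (phi : spec) : Prop :=
  forall A : seq D, size A = sm phi ->
    exists o : outcome D,
      exec A (fun _ => 0) P (RReturned o) /\
      match o with
      | OBot => forall B : seq D, size B = sn phi -> ~ spec_holds phi A B
      | OTuple B => size B = sn phi /\ spec_holds phi A B
      end.

Definition fragment := spec -> Prop.
Definition algorithm := spec -> prog.

Definition solves (D : numFieldType) (L : fragment) (alg : algorithm) : Prop :=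
  forall phi, L phi -> realizes D (alg phi) phi.

(* Over a rational input, a run over any ordered field F only ever handles
   images of rationals: the terms of a program have rational coefficients,
   and [ratr : rat -> F] is an order embedding, so every branch is decided
   exactly as in the rational run.  Hence each run over F on a rational
   input is the image of a run over Q, and a program realizing a
   specification over the reals realizes it over the rationals.  For the
   specification y * y = 2 without inputs this has a converse effect: a real
   realizer would have to return a tuple (because sqrt 2 exists), which would
   then be a rational square root of 2, so no program realizes it over R,
   while "return bottom" realizes it over Q. *)
From mathcomp Require Import all_boot all_order all_algebra.
From Stdlib Require Import Reals.
From mathcomp Require Import Rstruct.
From mathcomp Require Import zify.
Set Implicit Arguments.
Unset Strict Implicit.
Unset Printing Implicit Defensive.
Import Order.TTheory GRing.Theory Num.Theory.
Local Open Scope ring_scope.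

Section RatrSimulation.
Variable F : numFieldType.

Lemma teval_ratr (V : Type) (rho : V -> F) (rhoQ : V -> rat) :
  rho =1 ratr \o rhoQ -> forall t, teval rho t = ratr (teval rhoQ t).
Proof.
move=> rhoE; elim=> [v|q|t1 IH1 t2 IH2|t1 IH1 t2 IH2|t1 IH1] /=.
- exact: rhoE.
- by rewrite (fmorph_rat (ratr : {rmorphism rat -> F})).
- by rewrite IH1 IH2 rmorphD.
- by rewrite IH1 IH2 rmorphM.
- by rewrite IH1 rmorphN.
Qed.

Lemma feval_ratr (V : Type) (rho : V -> F) (rhoQ : V -> rat) :
  rho =1 ratr \o rhoQ -> forall f, feval rho f = feval rhoQ f.
Proof.
move=> rhoE; elim=> [t c|f IH|f1 IH1 f2 IH2|f1 IH1 f2 IH2] /=.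
- rewrite (teval_ratr rhoE); case: c => /=.
  + exact: ltrq0.
  + exact: ltr0q.
  + exact: lerq0.
  + exact: ler0q.
- by rewrite IH.
- by rewrite IH1 IH2.
- by rewrite IH1 IH2.
Qed.

Lemma nth_map_ratr (A : seq rat) i :
  nth 0 (map ratr A) i = ratr (nth 0 A i) :> F.
Proof. by elim: A i => [|a A IH] [|i] //=; rewrite rmorph0. Qed.

Lemma spec_holds_ratr phi (A B : seq rat) :
  spec_holds phi (map ratr A) (map (ratr : rat -> F) B) = spec_holds phi A B.
Proof. by apply: feval_ratr => -[i|j] /=; rewrite nth_map_ratr. Qed.

Lemma var_val_ratr (A : seq rat) (s : nat -> F) (sQ : nat -> rat) :
  s =1 ratr \o sQ -> var_val (map ratr A) s =1 ratr \o var_val A sQ.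
Proof. by move=> sE [i|k] /=; rewrite ?nth_map_ratr ?sE. Qed.

Lemma feval_var_val_ratr (A : seq rat) (s : nat -> F) (sQ : nat -> rat) c :
  s =1 ratr \o sQ -> feval (var_val (map ratr A) s) c = feval (var_val A sQ) c.
Proof. by move/var_val_ratr/feval_ratr. Qed.

Definition ratr_outcome (o : outcome rat) : outcome F :=
  match o with
  | OBot => OBot F
  | OTuple B => OTuple (map ratr B)
  end.

Definition is_ratr_result (r : result F) (rQ : result rat) : Prop :=
  match r, rQ with
  | RNormal s, RNormal sQ => s =1 ratr \o sQ
  | RReturned o, RReturned oQ => o = ratr_outcome oQ
  | _, _ => False
  end.

Lemma exec_ratr (A : seq rat) s P r : exec (map ratr A) s P r ->
  forall sQ, s =1 ratr \o sQ ->
  exists2 rQ, exec A sQ P rQ & is_ratr_result r rQ.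
Proof.
elim=> {s P r}.
- move=> s k t sQ sE; eexists; first exact: ExAssign.
  move=> k' /=; rewrite /upd; case: eqP => _ //.
  exact/teval_ratr/var_val_ratr.
- move=> s c P Q r hc _ IH sQ sE; have [rQ ex rE] := IH sQ sE.
  by exists rQ => //; apply: ExIfT _ ex; rewrite -(feval_var_val_ratr _ _ sE).
- move=> s c P Q r hc _ IH sQ sE; have [rQ ex rE] := IH sQ sE.
  by exists rQ => //; apply: ExIfF _ ex; rewrite -(feval_var_val_ratr _ _ sE).
- move=> s c P hc sQ sE; exists (RNormal sQ) => //.
  by apply: ExWhileF; rewrite -(feval_var_val_ratr _ _ sE).
- move=> s s' c P r hc _ IH1 _ IH2 sQ sE.
  have [[sQ'|//] ex1 sE'] := IH1 sQ sE; have [rQ ex2 rE] := IH2 sQ' sE'.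
  by exists rQ => //; apply: ExWhileTN _ ex1 ex2; rewrite -(feval_var_val_ratr _ _ sE).
- move=> s c P o hc _ IH sQ sE; have [[//|oQ] ex oE] := IH sQ sE.
  exists (RReturned oQ) => //.
  by apply: ExWhileTR _ ex; rewrite -(feval_var_val_ratr _ _ sE).
- move=> s s' P Q r _ IH1 _ IH2 sQ sE.
  have [[sQ'|//] ex1 sE'] := IH1 sQ sE; have [rQ ex2 rE] := IH2 sQ' sE'.
  by exists rQ => //; apply: ExSeqN ex2.
- move=> s P Q o _ IH sQ sE; have [[//|oQ] ex oE] := IH sQ sE.
  by exists (RReturned oQ) => //; apply: ExSeqR.
- move=> s vs sQ sE; eexists; first exact: ExRet.
  by rewrite /= -map_comp; congr OTuple; apply: eq_map; apply: var_val_ratr.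
- by move=> s sQ sE; eexists; first exact: ExRetBot.
Qed.

Lemma exec_ratr_returned (A : seq rat) P o :
  exec (map ratr A) (fun _ => 0) P (RReturned o) ->
  exists2 oQ, exec A (fun _ => 0) P (RReturned oQ) & o = ratr_outcome oQ.
Proof.
move=> ex; have [[//|oQ] exQ oE] := exec_ratr ex (fun=> esym (rmorph0 _)).
by exists oQ.
Qed.

Lemma realizes_ratr P phi : realizes F P phi -> realizes rat P phi.
Proof.
move=> realF A sizeA.
have [o [ex o_spec]] := realF (map ratr A) (etrans (size_map _ _) sizeA).
have [oQ exQ oE] := exec_ratr_returned ex; rewrite {}oE {ex} in o_spec.
exists oQ; split=> //; case: oQ {exQ} o_spec => [|BQ] /=.
- move=> noB BQ sizeBQ; rewrite -(spec_holds_ratr phi A BQ).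
  by apply: noB; rewrite size_map.
- by rewrite size_map spec_holds_ratr.
Qed.

Lemma realizes_rat_solution P phi (A : seq rat) (B : seq F) :
  realizes F P phi -> spec_holds phi (map ratr A) B ->
  size A = sm phi -> size B = sn phi ->
  exists2 BQ : seq rat, size BQ = sn phi & spec_holds phi A BQ.
Proof.
move=> realF solB sizeA sizeB.
have [o [ex o_spec]] := realF (map ratr A) (etrans (size_map _ _) sizeA).
have [[|BQ] _ oE] := exec_ratr_returned ex; rewrite {}oE /= in o_spec.
- by case: (o_spec B sizeB).
- by rewrite size_map spec_holds_ratr in o_spec; case: o_spec; exists BQ.
Qed.

End RatrSimulation.

Lemma rat_sqr_neq2 (q : rat) : q * q != 2.
Proof.
apply/eqP => sqq.
have numE : numq q * numq q = 2 * (denq q * denq q).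
  by apply: (@intr_inj rat); rewrite !rmorphM /= !numqE mulrACA sqq.
set a := `|numq q|%nat; set b := `|denq q|%nat.
have abE : (a * a = 2 * (b * b))%nat by rewrite /a /b -!abszM numE abszM.
have coprime_sq : coprime (a * a) (b * b).
  by rewrite coprimeMl !coprimeMr coprime_num_den.
have /eqP bb1 : coprime (b * b) (b * b).
  by apply: coprime_dvdl coprime_sq; rewrite abE dvdn_mull.
rewrite /coprime gcdnn in bb1.
by move: abE; rewrite bb1; clearbody a; case: (leqP a 1); nia.
Qed.

Definition sqr_sub2 : term ('I_0 + 'I_1) :=
  TAdd (TMul (TVar (inr ord0)) (TVar (inr ord0))) (TConst _ (-2)).

Definition sqrt2_spec : spec :=
  @Spec 0 1 (FAnd (FAtom sqr_sub2 CLe) (FAtom sqr_sub2 CGe)).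

Lemma sqrt2_spec_holds (D : numFieldType) (A : seq D) (b : D) :
  spec_holds sqrt2_spec A [:: b] = (b * b == 2).
Proof. by rewrite /spec_holds /= rmorphN rmorph_nat -eq_le subr_eq0. Qed.

Lemma sqrt2_spec_unsat_rat (A B : seq rat) :
  size B = 1%nat -> ~ spec_holds sqrt2_spec A B.
Proof.
by case: B => [|q [|]] //= _; rewrite sqrt2_spec_holds; apply/negP/rat_sqr_neq2.
Qed.

Lemma realizes_sqrt2_spec_rat : realizes rat PRetBot sqrt2_spec.
Proof.
by move=> A _; exists (OBot rat); split; [apply: ExRetBot | apply: sqrt2_spec_unsat_rat].
Qed.

Lemma not_realizes_sqrt2_spec_R P : ~ realizes (R : numFieldType) P sqrt2_spec.
Proof.
move=> realR.
have sqrt2_sol : spec_holds sqrt2_spec (map ratr [::]) [:: Num.sqrt 2 : R].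
  by rewrite sqrt2_spec_holds -expr2 sqr_sqrtr.
have [BQ sizeBQ] := realizes_rat_solution realR sqrt2_sol erefl erefl.
exact: sqrt2_spec_unsat_rat.
Qed.

Theorem mainTheorem1 :
  (forall (L : fragment) (alg : algorithm),
      solves (R : numFieldType) L alg -> solves (rat : numFieldType) L alg) /\
  (exists L : fragment,
      ~ (exists alg : algorithm, solves (R : numFieldType) L alg) /\
      (exists alg : algorithm, solves (rat : numFieldType) L alg)).
Proof.
split.
  by move=> L alg solR phi /solR; apply: realizes_ratr.
exists (eq^~ sqrt2_spec); split.
  by case=> alg /(_ sqrt2_spec erefl); apply: not_realizes_sqrt2_spec_R.
by exists (fun=> PRetBot) => _ ->; apply: realizes_sqrt2_spec_rat.
Qed.
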